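(* In the standing setting, let $(\psi,\alpha),(\phi,\beta)\in\mathcal{A}\times\mathcal{B}$ with liftings $\psi^\uparrow,\phi^\uparrow$, and write $d(g)=\psi^\uparrow(g)\phi^\uparrow(g)^{-1}$ and $e(h)=\phi^\uparrow(h)\psi^\uparrow(h)^{-1}$. Then $(G,r)$ and $(G,r')$ are set-theoretic non-degenerate solutions of the Yang--Baxter equation, where for $g,h\in G$ $$r(g,h)=\Big(d(g)\,h\,d(g)^{-1}\,\beta(g^{-1},h)\,\alpha(g,h),\ \ \psi^\uparrow(h)^{-1}\,d(g)\,h^{-1}\,d(g)^{-1}\,g\,\psi^\uparrow(g)\,h\,\psi^\uparrow(g)^{-1}\,\psi^\uparrow(h)\,\beta(g,h)\,\alpha(h^{-1},g)\Big),$$ $$r'(g,h)=\Big(g\,\psi^\uparrow(g)\,h\,\psi^\uparrow(g)^{-1}\,\phi^\uparrow(h)\,g^{-1}\,\phi^\uparrow(h)^{-1}\,\beta(h,g^{-1})\,\alpha(g,h),\ \ e(h)\,g\,e(h)^{-1}\,\beta(h,g)\,\alpha(h^{-1},g)\Big).$$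
   Context: Standing setting: $(G,\cdot)$ is a group, $K$ is a subgroup of $G$ contained in the centre $Z(G)$, and $A$ is a subgroup with $K\le A\le G$ and $A/K$ abelian. Let $\mathcal{A}=\{\psi\in\operatorname{End}(G/K):\psi(G/K)\le A/K\}$. A lifting of $\psi\in\mathcal{A}$ is any set map $\psi^{\uparrow}:G\to A$ with $\psi^{\uparrow}(g)K=\psi(gK)$ for all $g\in G$. Let $\mathcal{B}$ be the set of maps $\alpha:G\times G\to K$ that are bilinear, i.e. $\alpha(gh,k)=\alpha(g,k)\alpha(h,k)$ and $\alpha(g,hk)=\alpha(g,h)\alpha(g,k)$, and satisfy $\alpha(k,g)=\alpha(g,k)=1$ for all $k\in K$, $g\in G$. A set-theoretic solution of the Yang--Baxter equation is a pair $(X,r)$ with $X\neq\emptyset$ and $r:X\times X\to X\times X$, $r(x,y)=(\sigma_x(y),\tau_y(x))$, a bijection satisfying $(r\times\mathrm{id}_X)(\mathrm{id}_X\times r)(r\times\mathrm{id}_X)=(\mathrm{id}_X\times r)(r\times\mathrm{id}_X)(\mathrm{id}_X\times r)$; it is non-degenerate if all $\sigma_x$ and $\tau_x$ are bijective. *)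

From mathcomp Require Import ssreflect ssrfun ssrbool.

Set Implicit Arguments.
Unset Strict Implicit.

Record is_group (G : Type) (mul : G -> G -> G) (inv : G -> G) (one : G) : Prop :=
  { grp_mulA : forall x y z, mul x (mul y z) = mul (mul x y) z;
    grp_mul1g : forall x, mul one x = x;
    grp_mulVg : forall x, mul (inv x) x = one }.

Definition is_subgroup (G : Type) (mul : G -> G -> G) (inv : G -> G) (one : G)
    (H : G -> Prop) : Prop :=
  H one /\ (forall x y, H x -> H y -> H (mul x y)) /\ (forall x, H x -> H (inv x)).

Definition central (G : Type) (mul : G -> G -> G) (H : G -> Prop) : Prop :=
  forall k g, H k -> mul k g = mul g k.

(* A/K is abelian: (aK)(bK) = (bK)(aK), i.e. (ba)^{-1}(ab) \in K. *)
Definition quot_abelian (G : Type) (mul : G -> G -> G) (inv : G -> G)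
    (K A : G -> Prop) : Prop :=
  forall a b, A a -> A b -> K (mul (inv (mul b a)) (mul a b)).

(* f : G -> A is a lifting of some psi \in End(G/K) with psi(G/K) <= A/K:
   the map gK |-> f(g)K is well defined and is an endomorphism of G/K
   (its image then automatically lies in A/K since f(g) \in A).
   Conversely every lifting of every psi in the set \mathcal{A} satisfies this,
   and psi is determined by f (psi(gK) = f(g)K). *)
Definition lifting_in_calA (G : Type) (mul : G -> G -> G) (inv : G -> G)
    (K A : G -> Prop) (f : G -> G) : Prop :=
  (forall g, A (f g)) /\
  (forall g h, K (mul (inv g) h) -> K (mul (inv (f g)) (f h))) /\
  (forall g h, K (mul (inv (f (mul g h))) (mul (f g) (f h)))).

Definition in_calB (G : Type) (mul : G -> G -> G) (one : G)
    (K : G -> Prop) (alpha : G -> G -> G) : Prop :=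
  (forall g h, K (alpha g h)) /\
  (forall g h k, alpha (mul g h) k = mul (alpha g k) (alpha h k)) /\
  (forall g h k, alpha g (mul h k) = mul (alpha g h) (alpha g k)) /\
  (forall k g, K k -> alpha k g = one /\ alpha g k = one).

Definition r12 (X : Type) (r : X * X -> X * X) (t : X * X * X) : X * X * X :=
  let: (x, y, z) := t in let: (a, b) := r (x, y) in (a, b, z).
Definition r23 (X : Type) (r : X * X -> X * X) (t : X * X * X) : X * X * X :=
  let: (x, y, z) := t in let: (b, c) := r (y, z) in (x, b, c).

Definition is_YB_solution (X : Type) (r : X * X -> X * X) : Prop :=
  inhabited X /\ bijective r /\
  (forall t, r12 r (r23 r (r12 r t)) = r23 r (r12 r (r23 r t))).

(* r(x,y) = (sigma_x(y), tau_y(x)); non-degenerate: all sigma_x, tau_x bijective *)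
Definition non_degenerate (X : Type) (r : X * X -> X * X) : Prop :=
  (forall x, bijective (fun y => (r (x, y)).1)) /\
  (forall x, bijective (fun y => (r (y, x)).2)).

Definition sol_r (G : Type) (mul : G -> G -> G) (inv : G -> G)
    (psi phi : G -> G) (alpha beta : G -> G -> G) (p : G * G) : G * G :=
  let: (g, h) := p in
  let d := fun x => mul (psi x) (inv (phi x)) in
  ( mul (mul (mul (mul (d g) h) (inv (d g))) (beta (inv g) h)) (alpha g h),
    mul (mul (mul (mul (mul (mul (mul (mul (mul (mul
      (inv (psi h)) (d g)) (inv h)) (inv (d g))) g) (psi g)) h) (inv (psi g)))
      (psi h)) (beta g h)) (alpha (inv h) g) ).

Definition sol_r' (G : Type) (mul : G -> G -> G) (inv : G -> G)
    (psi phi : G -> G) (alpha beta : G -> G -> G) (p : G * G) : G * G :=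
  let: (g, h) := p in
  let e := fun x => mul (phi x) (inv (psi x)) in
  ( mul (mul (mul (mul (mul (mul (mul (mul
      g (psi g)) h) (inv (psi g))) (phi h)) (inv g)) (inv (phi h)))
      (beta h (inv g))) (alpha g h),
    mul (mul (mul (mul (e h) g) (inv (e h))) (beta h g)) (alpha (inv h) g) ).

(* The twisted product [x o y = x f(x) y f(x)^-1 gam(x,y)] is a group law on G
   for every lifting f of an endomorphism of G/K into A/K and every gam in B:
   all the error terms it produces lie in the central subgroup K, where the
   biadditive form gam ignores them.  Taking [+] for the (phi, beta)-product
   and [o] for the (psi, alpha)-product, one checks [g o h = g + lambda_g(h)]
   with [lambda_g(h) = d(g) h d(g)^-1 beta(g^-1,h) alpha(g,h)] additive in h, so
   (G, +, o) is a skew left brace.  Then r is the solution attached to this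
   brace, [r(g,h) = (lambda_g(h), lambda_g(h)^-o o g o h)], and r' the one
   attached to the brace with the opposite additive group. *)
From mathcomp Require Import ssreflect ssrfun ssrbool.

Set Implicit Arguments.
Unset Strict Implicit.

Section GroupTheory.
Variables (G : Type) (mul : G -> G -> G) (inv : G -> G) (one : G).
Hypothesis HG : is_group mul inv one.
Local Notation "x * y" := (mul x y).
Local Notation "x ^-1" := (inv x).

Lemma mulgA x y z : x * (y * z) = x * y * z.
Proof. exact: grp_mulA HG x y z. Qed.
Lemma mul1g x : one * x = x.
Proof. exact: grp_mul1g HG x. Qed.
Lemma mulVg x : x^-1 * x = one.
Proof. exact: grp_mulVg HG x. Qed.
Lemma mulgV x : x * x^-1 = one.
Proof.
have -> : x * x^-1 = (x^-1)^-1 * x^-1 * (x * x^-1) by rewrite mulVg mul1g.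
by rewrite -!mulgA (mulgA x^-1) mulVg mul1g mulVg.
Qed.
Lemma mulg1 x : x * one = x.
Proof. by rewrite -(mulVg x) mulgA mulgV mul1g. Qed.
Lemma mulgK x y : y * x * x^-1 = y.
Proof. by rewrite -mulgA mulgV mulg1. Qed.
Lemma mulgKV x y : y * x^-1 * x = y.
Proof. by rewrite -mulgA mulVg mulg1. Qed.
Lemma mulKg x y : x^-1 * (x * y) = y.
Proof. by rewrite mulgA mulVg mul1g. Qed.
Lemma mulKVg x y : x * (x^-1 * y) = y.
Proof. by rewrite mulgA mulgV mul1g. Qed.
Lemma mulgI x y z : x * y = x * z -> y = z.
Proof. by move=> e; rewrite -(mulKg x y) e mulKg. Qed.
Lemma mulIg x y z : y * x = z * x -> y = z.
Proof. by move=> e; rewrite -(mulgK x y) e mulgK. Qed.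
Lemma invg_unique x y : x * y = one -> y = x^-1.
Proof. by move=> e; apply: (@mulgI x); rewrite e mulgV. Qed.
Lemma invgK x : (x^-1)^-1 = x.
Proof. by symmetry; apply: invg_unique; rewrite mulVg. Qed.
Lemma invgM x y : (x * y)^-1 = y^-1 * x^-1.
Proof. by symmetry; apply: invg_unique; rewrite mulgA mulgK mulgV. Qed.
End GroupTheory.
Arguments mulgI [G mul inv one] HG x [y z].
Arguments mulIg [G mul inv one] HG x [y z].

(* A skew left brace (G, +, o), presented by its lambda map:
   [a o b = a + lam a b] with every [lam a] additive. *)
Section SkewBrace.
Variables (G : Type) (add : G -> G -> G) (opp : G -> G) (zero : G).
Variables (circ : G -> G -> G) (cinv : G -> G) (cone : G).
Hypothesis Hadd : is_group add opp zero.
Hypothesis Hcirc : is_group circ cinv cone.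
Variable lam : G -> G -> G.
Hypothesis circ_lam : forall a b, circ a b = add a (lam a b).
Hypothesis lam_add : forall a b c, lam a (add b c) = add (lam a b) (lam a c).
Variable r : G * G -> G * G.
Hypothesis r_spec : forall a b,
  (r (a, b)).1 = lam a b /\ circ (r (a, b)).1 (r (a, b)).2 = circ a b.

Let tau b a := (r (a, b)).2.

Lemma lam0 a : lam a zero = zero.
Proof. by apply: (mulgI Hadd (lam a zero)); rewrite -lam_add !(mulg1 Hadd). Qed.
Lemma cone_zero : cone = zero.
Proof. by rewrite -{1}(mul1g Hcirc zero) circ_lam lam0 (mulg1 Hadd). Qed.
Lemma lamN a b : lam a (opp b) = opp (lam a b).
Proof. by apply: (invg_unique Hadd); rewrite -lam_add (mulgV Hadd) lam0. Qed.
Lemma lam_circ a b c : lam (circ a b) c = lam a (lam b c).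
Proof.
have := mulgA Hcirc a b c.
rewrite [circ b c]circ_lam [circ a _]circ_lam lam_add (mulgA Hadd) -circ_lam.
by rewrite [circ (circ a b) c]circ_lam => /(mulgI Hadd) ->.
Qed.
Lemma lam1 c : lam cone c = c.
Proof. by have := mul1g Hcirc c; rewrite circ_lam cone_zero (mul1g Hadd). Qed.
Lemma lam_cinv a : lam a (cinv a) = opp a.
Proof. by apply: (invg_unique Hadd); rewrite -circ_lam (mulgV Hcirc) cone_zero. Qed.
Lemma circ_lam_tau a b : circ (lam a b) (tau b a) = circ a b.
Proof. by case: (r_spec a b) => <- ->. Qed.
Lemma r_lam_tau a b : r (a, b) = (lam a b, tau b a).
Proof. by case: (r_spec a b) => <- _; rewrite /tau; case: (r (a, b)). Qed.

(* tau is a right action of (G, o); this gives the last coordinate of the braid relation. *)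
Lemma tau_circ a b c : tau c (tau b a) = tau (circ b c) a.
Proof.
set w := tau b a; set u := lam a b.
have uw : circ u w = circ a b by exact: circ_lam_tau.
apply: (mulgI Hcirc (lam a (circ b c))); rewrite circ_lam_tau.
have -> : lam a (circ b c) = circ u (lam w c).
  by rewrite circ_lam lam_add -lam_circ -uw lam_circ -circ_lam.
by rewrite -(mulgA Hcirc) circ_lam_tau (mulgA Hcirc) uw (mulgA Hcirc).
Qed.

Lemma r_bijective : bijective r.
Proof.
pose rinv (p : G * G) := let: (u, v) := p in
  let x := add (circ u v) (opp u) in (x, circ (cinv x) (circ u v)).
exists rinv.
  case=> a b; rewrite r_lam_tau /rinv circ_lam_tau circ_lam (mulgK Hadd) -circ_lam.
  by rewrite (mulKg Hcirc).
case=> u v; rewrite /rinv.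
set x := add (circ u v) (opp u).
have xy : circ x (circ (cinv x) (circ u v)) = circ u v by rewrite (mulKVg Hcirc).
have lam_xy : lam x (circ (cinv x) (circ u v)) = u.
  by apply: (mulgI Hadd x); rewrite -circ_lam xy /x (mulgKV Hadd).
rewrite r_lam_tau lam_xy; congr (_, _).
by apply: (mulgI Hcirc u); rewrite -{1}lam_xy circ_lam_tau xy.
Qed.

Lemma r_braided t : r12 r (r23 r (r12 r t)) = r23 r (r12 r (r23 r t)).
Proof.
case: t => [[x y] w]; rewrite /r12 /r23 !r_lam_tau.
set a1 := lam (lam x y) (lam (tau y x) w).
set a2 := tau (lam (tau y x) w) (lam x y).
set a3 := tau w (tau y x).
set b1 := lam x (lam y w).
set b2 := lam (tau (lam y w) x) (tau w y).
set b3 := tau (tau w y) (tau (lam y w) x).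
have e1 : a1 = b1 by rewrite /a1 /b1 -lam_circ circ_lam_tau lam_circ.
have e3 : a3 = b3 by rewrite /a3 /b3 !tau_circ circ_lam_tau.
have pa : circ a1 (circ a2 a3) = circ x (circ y w).
  rewrite /a1 /a2 /a3 (mulgA Hcirc) circ_lam_tau -(mulgA Hcirc).
  by rewrite circ_lam_tau (mulgA Hcirc) circ_lam_tau -(mulgA Hcirc).
have pb : circ b1 (circ b2 b3) = circ x (circ y w).
  by rewrite /b1 /b2 /b3 circ_lam_tau (mulgA Hcirc) circ_lam_tau -(mulgA Hcirc) circ_lam_tau.
have e2 : a2 = b2.
  by apply: (mulIg Hcirc a3); apply: (mulgI Hcirc a1); rewrite pa e1 e3 pb.
by rewrite e1 e2 e3.
Qed.

Lemma r_non_degenerate : non_degenerate r.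
Proof.
split=> x.
  exists (lam (cinv x)) => y /=; rewrite r_lam_tau /= -lam_circ.
    by rewrite (mulVg Hcirc) lam1.
  by rewrite (mulgV Hcirc) lam1.
exists (fun v => circ (circ (cinv (lam v (cinv x))) v) (cinv x)) => [a|v] /=.
  rewrite r_lam_tau /=.
  set v := tau x a; set u := lam a x.
  have uv : circ u v = circ a x by exact: circ_lam_tau.
  have -> : lam v (cinv x) = cinv u.
    apply: (invg_unique Hcirc); rewrite circ_lam -lam_circ uv lam_circ lam_cinv lamN.
    by rewrite (mulgV Hadd) cone_zero.
  by rewrite (invgK Hcirc) uv (mulgK Hcirc).
set u := cinv (lam v (cinv x)).
set a := circ (circ u v) (cinv x).
have lam_v : lam v (cinv x) = cinv u by rewrite /u (invgK Hcirc).
have au : add a u = circ u v.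
  rewrite /a -(mulgA Hcirc) [circ v _]circ_lam lam_v circ_lam lam_add lam_cinv.
  by rewrite (mulgA Hadd) (mulgKV Hadd) -circ_lam.
have lam_ax : lam a x = u.
  by apply: (mulgI Hadd a); rewrite -circ_lam au /a (mulgKV Hcirc).
rewrite r_lam_tau /=.
by apply: (mulgI Hcirc u); rewrite -{1}lam_ax circ_lam_tau /a (mulgKV Hcirc).
Qed.

Lemma brace_solution : is_YB_solution r /\ non_degenerate r.
Proof.
split; last exact: r_non_degenerate.
by split; [constructor; exact: zero | split; [exact: r_bijective | exact: r_braided]].
Qed.
End SkewBrace.

Lemma opposite_brace_solution G (add : G -> G -> G) opp zero circ cinv cone
    lam (r : G * G -> G * G) :
  is_group add opp zero -> is_group circ cinv cone ->
  (forall a b, circ a b = add a (lam a b)) ->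
  (forall a b c, lam a (add b c) = add (lam a b) (lam a c)) ->
  (forall a b, (r (a, b)).1 = add (circ a b) (opp a) /\
               circ (r (a, b)).1 (r (a, b)).2 = circ a b) ->
  is_YB_solution r /\ non_degenerate r.
Proof.
move=> Hadd Hcirc circ_lam lam_add r_spec.
pose add_op x y := add y x.
have Hadd_op : is_group add_op opp zero.
  split=> [x y w|x|x]; rewrite /add_op.
  - by rewrite (mulgA Hadd).
  - exact: (mulg1 Hadd).
  - exact: (mulgV Hadd).
apply: (brace_solution (lam := fun a b => add (circ a b) (opp a)) Hadd_op Hcirc) => //.
  by move=> a b; rewrite /add_op (mulgKV Hadd).
by move=> a b c; rewrite /add_op !circ_lam lam_add !(mulgA Hadd) (mulgKV Hadd).
Qed.

Unset Implicit Arguments.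

Section TwistedProduct.
Variables (G : Type) (mul : G -> G -> G) (inv : G -> G) (one : G) (K A : G -> Prop).
Hypothesis HG : is_group mul inv one.
Hypothesis HK : is_subgroup mul inv one K.
Hypothesis HA : is_subgroup mul inv one A.
Hypothesis K_central : central mul K.
Hypothesis A_quot_abelian : quot_abelian mul inv K A.
Local Notation "x * y" := (mul x y).
Local Notation "x ^-1" := (inv x).

Local Notation mulgA := (mulgA HG).
Local Notation mul1g := (mul1g HG).
Local Notation mulVg := (mulVg HG).
Local Notation mulgV := (mulgV HG).
Local Notation mulg1 := (mulg1 HG).
Local Notation mulgK := (mulgK HG).
Local Notation mulgKV := (mulgKV HG).
Local Notation mulKg := (mulKg HG).
Local Notation mulKVg := (mulKVg HG).
Local Notation invgK := (invgK HG).
Local Notation invgM := (invgM HG).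

Lemma K1 : K one. Proof. by case: HK. Qed.
Lemma KM x y : K x -> K y -> K (x * y). Proof. by case: HK => _ []; auto. Qed.
Lemma KV x : K x -> K x^-1. Proof. by case: HK => _ []; auto. Qed.
Lemma AM x y : A x -> A y -> A (x * y). Proof. by case: HA => _ []; auto. Qed.
Lemma AV x : A x -> A x^-1. Proof. by case: HA => _ []; auto. Qed.
Lemma mulKC k x : K k -> k * x = x * k. Proof. exact: K_central. Qed.
Lemma mulgKC x k y : K k -> x * k * y = x * y * k.
Proof. by move=> Hk; rewrite -mulgA (mulKC k y Hk) mulgA. Qed.
Lemma conjgMK x c k y : K k -> x * (c * k) * y * (c * k)^-1 = x * c * y * c^-1.
Proof. by move=> Hk; rewrite invgM !mulgA (mulgKC _ k y) // mulgK. Qed.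
Lemma K_coset a b : K (a^-1 * b) -> exists2 k, K k & b = a * k.
Proof. by move=> H; exists (a^-1 * b) => //; rewrite mulKVg. Qed.
Lemma A_conjg a b : A a -> A b -> exists2 k, K k & a * b * a^-1 = b * k.
Proof.
move=> Ha Hb; have [k Hk e] := K_coset _ _ (A_quot_abelian a b Ha Hb).
by exists k => //; rewrite e mulgKC // mulgK.
Qed.

(* [a b a^-1] and [b] differ by a central factor, which conjugation ignores. *)
Lemma A_conjg_swap x a b y : A a -> A b ->
  x * a * b * a^-1 * y * a * b^-1 * a^-1 = x * b * y * b^-1.
Proof.
move=> Ha Hb; have [k Hk e] := A_conjg a b Ha Hb.
have e' : a * b^-1 * a^-1 = (b * k)^-1 by rewrite -e !invgM invgK !mulgA.
have -> : x * a * b * a^-1 * y * a * b^-1 * a^-1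
        = x * (a * b * a^-1) * y * (a * b^-1 * a^-1) by rewrite !mulgA.
by rewrite e e' conjgMK.
Qed.
Lemma A_conjVg_swap x a b y : A a -> A b ->
  x * a^-1 * b * a * y * a^-1 * b^-1 * a = x * b * y * b^-1.
Proof.
by move=> Ha Hb; rewrite -{2}(invgK a) -{4}(invgK a); apply: A_conjg_swap => //; exact: AV.
Qed.

Section Lifting.
Variable f : G -> G.
Hypothesis Hf : lifting_in_calA mul inv K A f.

Lemma lift_A x : A (f x). Proof. by case: Hf. Qed.
Lemma lift_mul x y : exists2 k, K k & f (x * y) = f x * f y * k.
Proof.
case: Hf => _ [_ H]; have [k Hk e] := K_coset _ _ (H x y).
by exists k^-1; [exact: KV | rewrite e mulgK].
Qed.
Lemma lift_one : K (f one).
Proof.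
have [k Hk] := lift_mul one one; rewrite mul1g => e.
have e' : f one * k = one by apply: (mulgI HG (f one)); rewrite mulgA -e mulg1.
have -> : f one = k^-1 by rewrite -(mulgK k (f one)) e' mul1g.
exact: KV.
Qed.
Lemma lift_mulK x k : K k -> exists2 k', K k' & f (x * k) = f x * k'.
Proof. by move=> Hk; case: Hf => _ [H _]; apply: K_coset; apply: H; rewrite mulKg. Qed.
Lemma lift_inv x : exists2 k, K k & f x^-1 = (f x)^-1 * k.
Proof.
have [k Hk] := lift_mul x^-1 x; rewrite mulVg => e.
have Hw : K (f one * k^-1) by apply: KM; [exact: lift_one | exact: KV].
by exists (f one * k^-1) => //; rewrite -(mulKC _ _ Hw) e !mulgK.
Qed.
Lemma lift_conjg c y : exists2 k, K k & f (c * y * c^-1) = f y * k.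
Proof.
have [k1 Hk1 ->] := lift_mul (c * y) c^-1.
have [k2 Hk2 ->] := lift_mul c y.
have [k3 Hk3 ->] := lift_inv c.
rewrite mulgA (mulgKC _ k2) //.
have [k4 Hk4 ->] := A_conjg (f c) (f y) (lift_A c) (lift_A y).
by exists (k4 * k2 * k3 * k1); [repeat apply: KM | rewrite !mulgA].
Qed.
Lemma lift_mul_conjg x c y k : K k ->
  exists2 k', K k' & f (x * c * y * c^-1 * k) = f x * f y * k'.
Proof.
move=> Hk; have [k1 Hk1 ->] := lift_mulK (x * c * y * c^-1) k Hk.
rewrite -!mulgA; have [k2 Hk2 ->] := lift_mul x (c * (y * c^-1)).
rewrite !mulgA; have [k3 Hk3 ->] := lift_conjg c y.
by exists (k3 * k2 * k1); [repeat apply: KM | rewrite !mulgA].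
Qed.
Lemma lift_conjg_K c y k1 k2 : K k1 -> K k2 ->
  exists2 k, K k & f (c * y * c^-1 * k1 * k2) = f y * k.
Proof.
move=> H1 H2.
have [k3 Hk3 ->] := lift_mulK (c * y * c^-1 * k1) k2 H2.
have [k4 Hk4 ->] := lift_mulK (c * y * c^-1) k1 H1.
have [k5 Hk5 ->] := lift_conjg c y.
by exists (k5 * k4 * k3); [repeat apply: KM | rewrite !mulgA].
Qed.
End Lifting.

Section Biadditive.
Variable gam : G -> G -> G.
Hypothesis Hgam : in_calB mul one K gam.

Lemma bil_K x y : K (gam x y). Proof. by case: Hgam. Qed.
Lemma bil_Ml x y z : gam (x * y) z = gam x z * gam y z.
Proof. by case: Hgam => _ []. Qed.
Lemma bil_Mr x y z : gam x (y * z) = gam x y * gam x z.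
Proof. by case: Hgam => _ [_ []]. Qed.
Lemma bil_Kl k x : K k -> gam k x = one.
Proof. by case: Hgam => _ [_ [_ H]] /(H k x) []. Qed.
Lemma bil_Kr k x : K k -> gam x k = one.
Proof. by case: Hgam => _ [_ [_ H]] /(H k x) []. Qed.
Lemma bil_Vl x y : gam x^-1 y = (gam x y)^-1.
Proof. by apply: (invg_unique HG); rewrite -bil_Ml mulgV bil_Kl //; exact: K1. Qed.
Lemma bil_Vr x y : gam x y^-1 = (gam x y)^-1.
Proof. by apply: (invg_unique HG); rewrite -bil_Mr mulgV bil_Kr //; exact: K1. Qed.
Lemma bil_conjl c x y : gam (c * x * c^-1) y = gam x y.
Proof. by rewrite !bil_Ml bil_Vl (mulKC (gam c y) (gam x y) (bil_K c y)) mulgK. Qed.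
Lemma bil_conjr c x y : gam y (c * x * c^-1) = gam y x.
Proof. by rewrite !bil_Mr bil_Vr (mulKC (gam y c) (gam y x) (bil_K y c)) mulgK. Qed.
Lemma bil_conjVl c x y : gam (c^-1 * x * c) y = gam x y.
Proof. by rewrite -{2}(invgK c) bil_conjl. Qed.
Lemma bil_conjVr c x y : gam y (c^-1 * x * c) = gam y x.
Proof. by rewrite -{2}(invgK c) bil_conjr. Qed.
Lemma bil_MKl x k y : K k -> gam (x * k) y = gam x y.
Proof. by move=> Hk; rewrite bil_Ml (bil_Kl k y Hk) mulg1. Qed.
Lemma bil_MKr x k y : K k -> gam y (x * k) = gam y x.
Proof. by move=> Hk; rewrite bil_Mr (bil_Kr k y Hk) mulg1. Qed.
Lemma bil_mul_conjgl x c y k z : K k -> gam (x * c * y * c^-1 * k) z = gam x z * gam y z.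
Proof. by move=> Hk; rewrite bil_MKl // -!mulgA bil_Ml !mulgA bil_conjl. Qed.
Lemma bil_mul_conjgr x c y k z : K k -> gam z (x * c * y * c^-1 * k) = gam z x * gam z y.
Proof. by move=> Hk; rewrite bil_MKr // -!mulgA bil_Mr !mulgA bil_conjr. Qed.
End Biadditive.

Definition tmul (f : G -> G) (gam : G -> G -> G) x y := x * f x * y * (f x)^-1 * gam x y.
Definition tinv (f : G -> G) (gam : G -> G -> G) x := (f x)^-1 * x^-1 * f x * gam x x.

Ltac push_central t H := rewrite ?(mulKC t _ H) ?(mulgKC _ t _ H).
Ltac cancel_central x H := push_central x H; push_central (x^-1) (KV _ H); rewrite mulgK.

Section TwistedGroup.
Variable f : G -> G.
Hypothesis Hf : lifting_in_calA mul inv K A f.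
Variable gam : G -> G -> G.
Hypothesis Hgam : in_calB mul one K gam.

Lemma tmulA x y z : tmul f gam x (tmul f gam y z) = tmul f gam (tmul f gam x y) z.
Proof.
rewrite /tmul.
have [k Hk ->] := lift_mul_conjg f Hf x (f x) y (gam x y) (bil_K gam Hgam x y).
rewrite conjgMK // (bil_mul_conjgl gam Hgam x (f x) y (gam x y) z (bil_K gam Hgam x y)).
rewrite (bil_mul_conjgr gam Hgam y (f y) z (gam y z) x (bil_K gam Hgam y z)) !invgM !mulgA.
by rewrite !(mulgKC _ (gam y z) _ (bil_K gam Hgam y z)) !(mulgKC _ (gam x y) _ (bil_K gam Hgam x y)) mulgKV.
Qed.

Lemma tmul1g y : tmul f gam one y = y.
Proof. by rewrite /tmul mul1g (mulKC (f one) y (lift_one f Hf)) mulgK (bil_Kl gam Hgam one y K1) mulg1. Qed.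

Lemma lift_tinv x : exists2 k, K k & f (tinv f gam x) = (f x)^-1 * k.
Proof.
rewrite /tinv.
have [k1 Hk1 ->] := lift_mulK f Hf ((f x)^-1 * x^-1 * f x) (gam x x) (bil_K gam Hgam x x).
rewrite -{2}(invgK (f x)); have [k2 Hk2 ->] := lift_conjg f Hf (f x)^-1 x^-1.
have [k3 Hk3 ->] := lift_inv f Hf x.
by exists (k3 * k2 * k1); [repeat apply: KM | rewrite !mulgA].
Qed.

Lemma tmulVg x : tmul f gam (tinv f gam x) x = one.
Proof.
rewrite /tmul; have [k Hk ->] := lift_tinv x.
rewrite conjgMK // /tinv (bil_MKl gam Hgam _ _ _ (bil_K gam Hgam x x)).
rewrite (bil_conjVl gam Hgam) (bil_Vl gam Hgam) invgK.
by rewrite !(mulgKC _ (gam x x) _ (bil_K gam Hgam x x)) mulgKV mulgK mulgKV mulVg.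
Qed.

Lemma tmul_group : is_group (tmul f gam) (tinv f gam) one.
Proof. by split; [exact: tmulA | exact: tmul1g | exact: tmulVg]. Qed.
End TwistedGroup.

Section Solutions.
Variables (psi phi : G -> G) (alpha beta : G -> G -> G).
Hypothesis Hpsi : lifting_in_calA mul inv K A psi.
Hypothesis Hphi : lifting_in_calA mul inv K A phi.
Hypothesis Halpha : in_calB mul one K alpha.
Hypothesis Hbeta : in_calB mul one K beta.

Definition dlift g := psi g * (phi g)^-1.
Definition elift h := phi h * (psi h)^-1.

Definition r_lam g h := dlift g * h * (dlift g)^-1 * beta g^-1 h * alpha g h.
Definition r_tau g h :=
  (psi h)^-1 * dlift g * h^-1 * (dlift g)^-1 * g * psi g * h * (psi g)^-1 * psi h
  * beta g h * alpha h^-1 g.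
Definition r'_lam g h :=
  g * psi g * h * (psi g)^-1 * phi h * g^-1 * (phi h)^-1 * beta h g^-1 * alpha g h.
Definition r'_tau g h := elift h * g * (elift h)^-1 * beta h g * alpha h^-1 g.

Lemma sol_rE g h : sol_r mul inv psi phi alpha beta (g, h) = (r_lam g h, r_tau g h).
Proof. by []. Qed.
Lemma sol_r'E g h : sol_r' mul inv psi phi alpha beta (g, h) = (r'_lam g h, r'_tau g h).
Proof. by []. Qed.

Lemma dlift_A g : A (dlift g).
Proof. by apply: AM; [exact: lift_A | apply: AV; exact: lift_A]. Qed.

Lemma tmul_r_lam g h : tmul psi alpha g h = tmul phi beta g (r_lam g h).
Proof.
rewrite /tmul /r_lam (bil_MKr beta Hbeta _ _ _ (bil_K alpha Halpha g h)).
rewrite (bil_MKr beta Hbeta _ _ _ (bil_K beta Hbeta _ h)) (bil_conjr beta Hbeta).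
rewrite /dlift !invgM invgK !mulgA.
rewrite !(mulgKC _ (beta g^-1 h) _ (bil_K beta Hbeta _ _)).
rewrite !(mulgKC _ (alpha g h) _ (bil_K alpha Halpha _ _)).
rewrite A_conjg_swap; try exact: lift_A.
by rewrite (bil_Vl beta Hbeta g h) mulgK.
Qed.

Lemma r_lam_tmul g b c :
  r_lam g (tmul phi beta b c) = tmul phi beta (r_lam g b) (r_lam g c).
Proof.
rewrite /tmul {1}/r_lam.
rewrite (bil_mul_conjgr beta Hbeta _ _ _ _ _ (bil_K beta Hbeta b c)).
rewrite (bil_mul_conjgr alpha Halpha _ _ _ _ _ (bil_K beta Hbeta b c)).
have [k Hk ->] := lift_conjg_K phi Hphi (dlift g) b _ _
  (bil_K beta Hbeta g^-1 b) (bil_K alpha Halpha g b).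
rewrite conjgMK // /r_lam.
rewrite (bil_MKl beta Hbeta _ _ _ (bil_K alpha Halpha _ _)).
rewrite (bil_MKl beta Hbeta _ _ _ (bil_K beta Hbeta _ _)) (bil_conjl beta Hbeta).
rewrite (bil_MKr beta Hbeta _ _ _ (bil_K alpha Halpha _ _)).
rewrite (bil_MKr beta Hbeta _ _ _ (bil_K beta Hbeta _ _)) (bil_conjr beta Hbeta).
move: (dlift g) (dlift_A g) => D HD; rewrite !mulgA.
rewrite !(mulgKC _ (beta g^-1 b) _ (bil_K beta Hbeta _ _)).
rewrite !(mulgKC _ (beta g^-1 c) _ (bil_K beta Hbeta _ _)).
rewrite !(mulgKC _ (alpha g b) _ (bil_K alpha Halpha _ _)).
rewrite !(mulgKC _ (alpha g c) _ (bil_K alpha Halpha _ _)).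
rewrite !(mulgKC _ (beta b c) _ (bil_K beta Hbeta _ _)).
do 5 congr (_ * _).
by apply: (mulIg HG D); rewrite mulgKV A_conjVg_swap //; exact: lift_A.
Qed.

Lemma tmul_r g h : tmul psi alpha (r_lam g h) (r_tau g h) = tmul psi alpha g h.
Proof.
rewrite /tmul.
have [k Hk ->] := lift_conjg_K psi Hpsi (dlift g) h _ _
  (bil_K beta Hbeta g^-1 h) (bil_K alpha Halpha g h).
rewrite conjgMK // {1}/r_lam (bil_MKl alpha Halpha _ _ _ (bil_K alpha Halpha _ _)).
rewrite (bil_MKl alpha Halpha _ _ _ (bil_K beta Hbeta _ _)) (bil_conjl alpha Halpha).
rewrite /r_tau (bil_MKr alpha Halpha _ _ _ (bil_K alpha Halpha _ _)).
rewrite (bil_MKr alpha Halpha _ _ _ (bil_K beta Hbeta _ _)).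
rewrite /r_lam; move: (dlift g) => D.
have -> : alpha h ((psi h)^-1 * D * h^-1 * D^-1 * g * psi g * h * (psi g)^-1 * psi h)
          = alpha h g.
  rewrite !(bil_Mr alpha Halpha) !(bil_Vr alpha Halpha).
  cancel_central (alpha h (psi h)) (bil_K alpha Halpha h (psi h)).
  cancel_central (alpha h D) (bil_K alpha Halpha h D).
  cancel_central (alpha h h) (bil_K alpha Halpha h h).
  by cancel_central (alpha h (psi g)) (bil_K alpha Halpha h (psi g)).
rewrite !mulgA (bil_Vl beta Hbeta) (bil_Vl alpha Halpha).
cancel_central (beta g h) (bil_K beta Hbeta g h).
cancel_central (alpha h g) (bil_K alpha Halpha h g).
push_central (alpha g h) (bil_K alpha Halpha g h).
by rewrite !mulgK mulgKV mulgK mulgV mul1g.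
Qed.

Lemma r'_lamE g h : r'_lam g h = tmul phi beta (tmul psi alpha g h) (tinv phi beta g).
Proof.
rewrite /tmul.
have [k Hk ->] := lift_mul_conjg phi Hphi g (psi g) h (alpha g h) (bil_K alpha Halpha g h).
rewrite conjgMK // (bil_mul_conjgl beta Hbeta _ _ _ _ _ (bil_K alpha Halpha g h)) /tinv.
rewrite !(bil_MKr beta Hbeta _ _ _ (bil_K beta Hbeta g g)) !(bil_conjVr beta Hbeta).
rewrite (bil_Vr beta Hbeta g g) !invgM !mulgA.
cancel_central (beta g g) (bil_K beta Hbeta g g).
push_central (beta h g^-1) (bil_K beta Hbeta h g^-1).
push_central (alpha g h) (bil_K alpha Halpha g h).
by rewrite A_conjg_swap; try exact: lift_A.
Qed.

Lemma lift_r'_lam g h : exists2 k, K k & psi (r'_lam g h) = psi h * k.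
Proof.
rewrite /r'_lam.
set w := g * psi g * h * (psi g)^-1 * phi h * g^-1 * (phi h)^-1.
have [k1 Hk1 ->] := lift_mulK psi Hpsi (w * beta h g^-1) _ (bil_K alpha Halpha g h).
have [k2 Hk2 ->] := lift_mulK psi Hpsi w _ (bil_K beta Hbeta h g^-1).
have -> : w = g * (psi g * h * (psi g)^-1) * (phi h * g^-1 * (phi h)^-1)
  by rewrite /w !mulgA.
have [k3 Hk3 ->] := lift_mul psi Hpsi (g * (psi g * h * (psi g)^-1)) (phi h * g^-1 * (phi h)^-1).
have [k4 Hk4 ->] := lift_mul psi Hpsi g (psi g * h * (psi g)^-1).
have [k5 Hk5 ->] := lift_conjg psi Hpsi (psi g) h.
have [k6 Hk6 ->] := lift_conjg psi Hpsi (phi h) g^-1.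
have [k7 Hk7 ->] := lift_inv psi Hpsi g.
rewrite !mulgA; push_central k5 Hk5; push_central k4 Hk4.
have [k8 Hk8 ->] := A_conjg (psi g) (psi h) (lift_A psi Hpsi g) (lift_A psi Hpsi h).
by exists (k8 * k7 * k6 * k3 * k2 * k1 * k5 * k4); [repeat apply: KM | rewrite !mulgA].
Qed.

Lemma tmul_r' g h : tmul psi alpha (r'_lam g h) (r'_tau g h) = tmul psi alpha g h.
Proof.
rewrite {1}/tmul; have [k Hk ->] := lift_r'_lam g h.
rewrite conjgMK // {1}/r'_lam (bil_MKl alpha Halpha _ _ _ (bil_K alpha Halpha _ _)).
rewrite (bil_MKl alpha Halpha _ _ _ (bil_K beta Hbeta _ _)).
rewrite {1}/r'_tau (bil_MKr alpha Halpha _ _ _ (bil_K alpha Halpha _ _)).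
rewrite (bil_MKr alpha Halpha _ _ _ (bil_K beta Hbeta _ _)) (bil_conjr alpha Halpha).
have -> : alpha (g * psi g * h * (psi g)^-1 * phi h * g^-1 * (phi h)^-1) g = alpha h g.
  rewrite !(bil_Ml alpha Halpha) !(bil_Vl alpha Halpha).
  cancel_central (alpha g g) (bil_K alpha Halpha g g).
  cancel_central (alpha (psi g) g) (bil_K alpha Halpha (psi g) g).
  by cancel_central (alpha (phi h) g) (bil_K alpha Halpha (phi h) g).
rewrite /r'_lam /r'_tau /elift /tmul !invgM invgK !mulgA (bil_Vr beta Hbeta).
rewrite (bil_Vl alpha Halpha).
push_central ((beta h g)^-1) (KV _ (bil_K beta Hbeta h g)).
push_central (beta h g) (bil_K beta Hbeta h g).
rewrite mulgKV.
cancel_central (alpha h g) (bil_K alpha Halpha h g).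
push_central (alpha g h) (bil_K alpha Halpha g h).
rewrite A_conjg_swap; try exact: lift_A.
by rewrite !mulgKV mulgK.
Qed.

Lemma sol_r_solution :
  is_YB_solution (sol_r mul inv psi phi alpha beta) /\
  non_degenerate (sol_r mul inv psi phi alpha beta).
Proof.
apply: (brace_solution (tmul_group phi Hphi beta Hbeta) (tmul_group psi Hpsi alpha Halpha)
          tmul_r_lam r_lam_tmul).
by move=> g h; rewrite sol_rE; split; [| exact: tmul_r].
Qed.

Lemma sol_r'_solution :
  is_YB_solution (sol_r' mul inv psi phi alpha beta) /\
  non_degenerate (sol_r' mul inv psi phi alpha beta).
Proof.
apply: (opposite_brace_solution (tmul_group phi Hphi beta Hbeta)
          (tmul_group psi Hpsi alpha Halpha) tmul_r_lam r_lam_tmul).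
by move=> g h; rewrite sol_r'E; split; [exact: r'_lamE | exact: tmul_r'].
Qed.
End Solutions.
End TwistedProduct.

Theorem mainTheorem14 (G : Type) (mul : G -> G -> G) (inv : G -> G) (one : G)
    (K A : G -> Prop) (psi_up phi_up : G -> G) (alpha beta : G -> G -> G) :
  is_group mul inv one ->
  is_subgroup mul inv one K -> is_subgroup mul inv one A ->
  central mul K -> (forall k, K k -> A k) -> quot_abelian mul inv K A ->
  lifting_in_calA mul inv K A psi_up -> lifting_in_calA mul inv K A phi_up ->
  in_calB mul one K alpha -> in_calB mul one K beta ->
  (is_YB_solution (sol_r mul inv psi_up phi_up alpha beta) /\
   non_degenerate (sol_r mul inv psi_up phi_up alpha beta)) /\
  (is_YB_solution (sol_r' mul inv psi_up phi_up alpha beta) /\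
   non_degenerate (sol_r' mul inv psi_up phi_up alpha beta)).
Proof.
move=> HG HK HA HKc _ HAab Hpsi Hphi Halpha Hbeta; split.
  exact: (sol_r_solution _ _ _ _ _ _ HG HK HA HKc HAab _ _ _ _ Hpsi Hphi Halpha Hbeta).
exact: (sol_r'_solution _ _ _ _ _ _ HG HK HA HKc HAab _ _ _ _ Hpsi Hphi Halpha Hbeta).
Qed.
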